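(* Let $q$ be a prime power, $h\geq 2$, and let $f:\mathbb{F}_{q^h}\to\mathbb{F}_q$ be any nonzero $\mathbb{F}_q$-linear functional. Then there exist $\alpha\in\mathbb{F}_{q^h}\setminus\mathbb{F}_q$ and an $\mathbb{F}_q$-linear functional $g:\mathbb{F}_{q^h}\to\mathbb{F}_q$ such that (1) $g(1)=g(\alpha)=1$; (2) $f(1/\alpha)\neq 0$; (3) $f\left(\frac{k-1}{k(k-1)\alpha-k^2}\right)\neq 1$ for all $k\in\mathbb{F}_q\setminus\{0,1\}$. *)

From HB Require Import structures.
From mathcomp Require Import all_boot all_order all_algebra all_field.
Set Implicit Arguments. Unset Strict Implicit. Unset Printing Implicit Defensive.

From HB Require Import structures.
From mathcomp Require Import all_boot all_order all_algebra all_field.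
From mathcomp Require Import zify ring.
Set Implicit Arguments.
Unset Strict Implicit.
Unset Printing Implicit Defensive.
Import GRing.Theory.
Local Open Scope ring_scope.

(* Writing c_k = k / (k - 1), condition (3) for k says f((alpha - c_k)^-1) != k,
   and condition (2) is the same statement for k = 0 (c_0 = 0). For fixed k the
   map alpha |-> (alpha - c_k)^-1 is a bijection of L, so each of these q - 1
   conditions fails exactly on the preimage of a fiber of f, i.e. for q^(h-1)
   values of alpha. Excluding also the q elements of F_q, and noting that
   alpha = 0 is excluded twice, at most q + (q - 1) q^(h-1) - 1 < q^h values are
   excluded. For any remaining alpha, 1 and alpha are linearly independent, so
   some functional g is 1 on both. *)

Lemma leq_card_bigcup (T I : finType) (P : pred I) (A : I -> {set T}) (n : nat) :
  (forall i, P i -> #|A i| <= n)%N -> (#|\bigcup_(i | P i) A i| <= #|P| * n)%N.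
Proof.
move=> leAn; rewrite -sum_nat_const.
elim/big_ind2: _ => [|m U p V leUm leVp|i /leAn //]; first by rewrite cards0.
exact: leq_trans (leq_of_leqif (leq_card_setU U V)) (leq_add leUm leVp).
Qed.

Section LinearFunctional.
Variables (F : finFieldType) (vT : vectType F).
Local Notation T := (finvect_type vT).
Variable f : 'Hom(T, F^o).
Hypothesis f_neq0 : f != 0.

Lemma dim_lker_functional : \dim (lker f) = (\dim {:T}).-1.
Proof.
have [y fy_neq0] := lfunPn f_neq0; rewrite lfunE /= in fy_neq0.
have dim_limg : \dim (limg f) = 1%N.
  have := dimvS (subvf (limg f)); rewrite dimvf => /= le_limg1.
  apply/eqP; rewrite eqn_leq le_limg1 /=.
  rewrite lt0n dimv_eq0; apply: contraNneq fy_neq0 => limg_eq0.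
  by rewrite -memv0 -limg_eq0 memv_img ?memvf.
by rewrite -(limg_ker_dim f fullv) capfv dim_limg addn1.
Qed.

Lemma card_functional_fiber (v : F) :
  #|[set x : T | f x == v]| = (#|F| ^ (\dim {:T}).-1)%N.
Proof.
have [y fy_neq0] := lfunPn f_neq0; rewrite lfunE /= in fy_neq0.
pose x0 : T := (v / f y) *: y.
have fx0 : f x0 = v by rewrite linearZ /= [_ *: _]mulfVK.
have -> : [set x : T | f x == v] = [set x + x0 | x : T in lker f].
  apply/setP=> x; rewrite inE; apply/eqP/imsetP=> [fx | [z z_ker ->]].
    by exists (x - x0); rewrite ?subrK // memv_ker linearB /= fx fx0 subrr.
  by move: z_ker; rewrite linearD /= fx0 memv_ker => /eqP->; rewrite add0r.
rewrite card_imset; last exact: addIr.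
by rewrite -dim_lker_functional card_vspace.
Qed.
End LinearFunctional.

Lemma functional_of_free (F : fieldType) (vT : vectType F) (X : seq vT) (ys : seq F) :
  free X -> size ys = size X -> exists g : 'Hom(vT, F^o), map g X = ys.
Proof.
have [g gX] := linear_of_free X (ys : seq F^o).
by move=> freeX sz; exists (linfun g); rewrite -gX //; apply: eq_map => x; rewrite lfunE.
Qed.

Section FiniteFieldExtension.
Variables (F : finFieldType) (L : fieldExtType F).
Local Notation T := (finvect_type L).

Lemma card_functional_fiber_inv_translate (f : 'Hom(T, F^o)) (c v : F) : f != 0 ->
  #|[set a : T | f ((a - c%:A)^-1) == v]| = (#|F| ^ (\dim {:L}).-1)%N.
Proof.
move=> f_neq0; have inv_translate_inj : injective (fun a : T => (a - c%:A)^-1).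
  by move=> a b /= /invr_inj /addIr.
rewrite -(card_functional_fiber f_neq0 v) -[RHS](card_preimset _ inv_translate_inj).
by apply: eq_card => a; rewrite !inE.
Qed.

Lemma exists_functional_1_at_1_and (a : L) : a \notin 1%VS ->
  exists g : 'Hom(L, F^o), g 1 = 1 /\ g a = 1.
Proof.
move=> a_notin1; have free_a1 : free [:: a; 1].
  by rewrite free_cons span_seq1 a_notin1 seq1_free oner_eq0.
by have [g [ga g1]] := functional_of_free free_a1 (erefl : size [:: 1; 1] = _); exists g.
Qed.

Lemma scale_inv_translate (k : F) (a : L) : k != 1 ->
  (k - 1)%:A / ((k * (k - 1))%:A * a - (k ^+ 2)%:A)
    = k^-1 *: (a - (k / (k - 1))%:A)^-1.
Proof.
move=> k_neq1; have k1_neq0 : k - 1 != 0 by rewrite subr_eq0.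
have -> : (k * (k - 1))%:A * a - (k ^+ 2)%:A
    = (k * (k - 1))%:A * (a - (k / (k - 1))%:A).
  rewrite (mulrBr ((k * (k - 1))%:A)) [X in _ = _ - X]mulr_algl scalerA.
  by congr (_ - _%:A); field.
rewrite invfM mulrA -[RHS]mulr_algl; congr (_ * _).
rewrite -!in_algE -fmorphV -rmorphM; congr (in_alg _ _).
by rewrite invfM mulrCA mulfV // mulr1.
Qed.

Lemma exists_notin_line_bigcup (I : finType) (P : pred I) (B : I -> {set T})
    (i0 : I) :
  (2 <= \dim {:L})%N -> (#|P| < #|F|)%N -> P i0 -> 0 \in B i0 ->
  (forall i, P i -> #|B i| <= #|F| ^ (\dim {:L}).-1)%N ->
  exists a : T, a \notin 1%VS /\ forall i, P i -> a \notin B i.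
Proof.
move=> dimL_ge2 ltPF Pi0 B0 cardB.
set q := #|F|; set n := (\dim {:L}).-1.
pose S : {set T} := [set x : T | x \in 1%VS]; pose U := \bigcup_(i | P i) B i.
have cardS : #|S| = q by rewrite cardsE card_vspace1.
have cardU : (#|U| <= #|P| * q ^ n)%N := leq_card_bigcup cardB.
(* The overlap 0 \in S :&: U is what makes the count strict when \dim {:L} = 2. *)
have cardSU_gt0 : (0 < #|S :&: U|)%N.
  by apply/card_gt0P; exists 0; rewrite !inE rpred0; apply/bigcupP; exists i0.
have dimL : \dim {:L} = n.+1 by rewrite prednK // ltnW.
have n_gt0 : (0 < n)%N by rewrite -ltnS -dimL.
have cardT : #|T| = (q ^ n.+1)%N.
  by rewrite -(card_vspacef (Vector.class T)) card_vspace dimL.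
have q_gt0 : (0 < q)%N by rewrite ltnW ?card_finNzRing_gt1.
have q_le_qn : (q <= q ^ n)%N by rewrite -{1}(expn1 q) leq_pexp2l.
have cardU_qn : (#|U| + q ^ n <= q * q ^ n)%N.
  by rewrite (leq_trans (leq_add cardU (leqnn _))) // -mulSnr leq_mul2r ltPF orbT.
have : (0 < #|~: (S :|: U)|)%N.
  rewrite cardsCs setCK cardT cardsU cardS expnS.
  move: (q ^ n)%N (q * q ^ n)%N cardU_qn q_le_qn => Q X; lia.
case/card_gt0P=> a; rewrite !inE negb_or => /andP[a_notin1 a_notinU].
by exists a; split=> // i Pi; apply: contra a_notinU => aBi; apply/bigcupP; exists i.
Qed.

End FiniteFieldExtension.

Theorem proposition3p5 (F : finFieldType) (L : fieldExtType F)
    (hL : (2 <= \dim {:L})%N) (f : 'Hom(L, F^o)) (hf : f != 0) :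
  exists (alpha : L) (g : 'Hom(L, F^o)),
    alpha \notin 1%VS /\
    [/\ g 1 = 1, g alpha = 1,
        f alpha^-1 != 0 &
        forall k : F, k != 0 -> k != 1 ->
          f (((k - 1)%:A) / ((k * (k - 1))%:A * alpha - (k ^+ 2)%:A)) != 1].
Proof.
pose B (k : F) := [set a : finvect_type L | f ((a - (k / (k - 1))%:A)^-1) == k].
have [||||a [a_notin1 a_notinB]] := @exists_notin_line_bigcup F L _ (predC1 1) B 0 hL.
- by rewrite cardC1 prednK // ltnW ?card_finNzRing_gt1.
- by rewrite /= eq_sym oner_neq0.
- by rewrite inE mul0r scale0r subr0 invr0 linear0.
- by move=> k _; rewrite card_functional_fiber_inv_translate.
have [g [g1 ga]] := exists_functional_1_at_1_and a_notin1.
exists a, g; split=> //; split=> //.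
- have /a_notinB : (0 : F) != 1 by rewrite eq_sym oner_neq0.
  by rewrite /B inE mul0r scale0r subr0.
move=> k k_neq0 k_neq1; rewrite scale_inv_translate // linearZ /=.
apply: contra (a_notinB k k_neq1) => /eqP fa_k; rewrite /B inE.
by rewrite -[f _](mulVKf k_neq0) [_ * f _]fa_k mulr1.
Qed.
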